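(* Let $P$ be a probability measure on $(\Omega,\mathcal A)$, let $\delta\in(\tfrac12,1)$, and let $\bar{\mathbf C}_1,\bar{\mathbf C}_2\subseteq\bar{\mathcal A}$ be C-classes. If $\bar T(P,\delta)\subseteq\bar{\mathbf C}_1\cap\bar{\mathbf C}_2$, then $\bar{\mathbf C}_1\sim\bar{\mathbf C}_2$, i.e. $\bar M_{\bar{\mathbf C}_1}=\bar M_{\bar{\mathbf C}_2}$.
   Context: Let $(\Omega,\mathcal A)$ be a measurable space. For $n\ge1$, $\mathcal A^n$ is the product $\sigma$-algebra on $\Omega^n$; the extended event space is $\bar{\mathcal A}=\bigcup_{n\ge1}\mathcal A^n$, events tagged by their level $n$ (written $A^{(n)}$). For $k\ge1$, $(\Omega^n)^k$ is identified with $\Omega^{nk}$ and $(\mathcal A^n)^k$ with $\mathcal A^{nk}$. For a probability measure $P$ on $\mathcal A$, $P^n$ is its $n$-fold product, $\bar P(A^{(n)})=P^n(A^{(n)})$, and $\bar T(P,\delta)=\{A\in\bar{\mathcal A}:\bar P(A)\ge\delta\}$. For $A^{(n)}\in\mathcal A^n$, an interval $I\subseteq[0,1]$ and $k\in\mathbb N^+$, $S(A^{(n)},I,k)=\{(\omega_1,\dots,\omega_k)\in(\Omega^n)^k:\frac1k\sum_{i=1}^k\chi_{A^{(n)}}(\omega_i)\in I\}$. A class $\bar{\mathbf C}\subseteq\bar{\mathcal A}$ is a C-class if for every $n$ the component $\mathcal C^{(n)}=\bar{\mathbf C}\cap\mathcal A^n$ satisfies: $\Omega^n\in\mathcal C^{(n)}$;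 closed under supersets within $\mathcal A^n$; contains no two disjoint events. ''$S(A,I,k)\in\bar{\mathbf C}$ definitively'' means there is $k_0$ with $S(A,I,k)\in\bar{\mathbf C}$ for all $k>k_0$. The C-measure of a C-class is $\bar M_{\bar{\mathbf C}}(A)=\sup\{\sigma\in[0,1]: S(A,[\sigma,1],k)\in\bar{\mathbf C}\text{ definitively}\}$. Two C-classes are equivalent, $\bar{\mathbf C}_1\sim\bar{\mathbf C}_2$, if $\bar M_{\bar{\mathbf C}_1}=\bar M_{\bar{\mathbf C}_2}$. *)

From HB Require Import structures.
From mathcomp Require Import all_boot all_order all_algebra.
From mathcomp Require Import all_classical all_reals all_analysis.
Set Implicit Arguments. Unset Strict Implicit. Unset Printing Implicit Defensive.
Import Order.TTheory GRing.Theory Num.Theory.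
Local Open Scope classical_set_scope.
Local Open Scope ring_scope.

(* Omega^n is represented by n.-tuple T, which carries (in mathcomp-analysis)
   the product sigma-algebra generated by the coordinate projections.
   A class of extended events is a level-indexed family
   C : forall n, set (set (n.-tuple T)); only levels n >= 1 are meaningful. *)

Section Defs.
Context {d : measure_display} {T : measurableType d} {R : realType}.

Fixpoint prodP (P : probability T R) (n : nat) : set (n.-tuple T) -> \bar R :=
  match n with
  | 0 => fun A => (\1_A ([tuple] : 0.-tuple T))%:E
  | m.+1 => fun A => (\int[P]_x @prodP P m [set t : m.-tuple T | A (cons_tuple x t)])%E
  end.

Definition Tbar (P : probability T R) (delta : R) (n : nat)
  : set (set (n.-tuple T)) :=
  [set A | measurable A /\ (delta%:E <= @prodP P n A)%E].

Lemma block_lt (n k : nat) (i : 'I_k) (j : 'I_n) : (i * n + j < n * k)%N.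
Proof.
case: i j => i /= Hi [j /= Hj].
have H : (i.+1 * n <= k * n)%N by rewrite leq_mul2r Hi orbT.
rewrite [(n * k)%N]mulnC; apply: leq_trans H.
by rewrite mulSn [(n + _)%N]addnC ltn_add2l.
Qed.

(* identification (Omega^n)^k = Omega^(nk): the i-th block of w *)
Definition block (n k : nat) (w : (n * k).-tuple T) (i : 'I_k) : n.-tuple T :=
  [tuple tnth w (Ordinal (block_lt i j)) | j < n].

Definition Sset (n : nat) (A : set (n.-tuple T)) (I : interval R) (k : nat)
  : set ((n * k).-tuple T) :=
  [set w | ((\sum_(i < k) \1_A (block w i)) / k%:R) \in I].

Definition CClass (C : forall n : nat, set (set (n.-tuple T))) : Prop :=
  forall n : nat, (0 < n)%N ->
    [/\ (forall A, C n A -> measurable A),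
        C n setT,
        (forall A B, C n A -> measurable B -> A `<=` B -> C n B) &
        (forall A B, C n A -> C n B -> A `&` B !=set0)].

Definition definitively_in (C : forall n : nat, set (set (n.-tuple T)))
  (n : nat) (A : set (n.-tuple T)) (I : interval R) : Prop :=
  exists k0 : nat, forall k : nat, (k0 < k)%N -> C (n * k)%N (@Sset n A I k).

Definition Cmeasure (C : forall n : nat, set (set (n.-tuple T)))
  (n : nat) (A : set (n.-tuple T)) : R :=
  sup [set s : R | 0 <= s <= 1 /\ @definitively_in C n A `[s, 1]].

Definition Cequiv (C1 C2 : forall n : nat, set (set (n.-tuple T))) : Prop :=
  forall n : nat, (0 < n)%N -> forall A : set (n.-tuple T), measurable A ->
    @Cmeasure C1 n A = @Cmeasure C2 n A.

End Defs.

From HB Require Import structures.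
From mathcomp Require Import all_boot all_order all_algebra.
From mathcomp Require Import all_classical all_reals all_analysis.
From mathcomp Require Import measurable_realfun lra.
Import Order.TTheory GRing.Theory Num.Theory.
Local Open Scope classical_set_scope.
Local Open Scope ring_scope.

(* Let C be a C-class containing every event of P-probability at least
   delta < 1, and A a measurable event with p = P^n(A).  A Chernoff bound on
   the moment generating function of the number of hits of A among k
   independent blocks shows that the frequency of A concentrates at p.  So for
   s < p the event S(A, [s,1], k) eventually has probability at least delta
   and lies in C, while for s > p its complement eventually does, and then
   S(A, [s,1], k) cannot lie in C since C contains no two disjoint events.
   Hence the C-measure of A is p, independently of C. *)

Fixpoint iter_integral {d : measure_display} {T : measurableType d}
    {R : realType} (P : probability T R) (n : nat) :
    (n.-tuple T -> \bar R) -> \bar R :=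
  match n with
  | 0 => fun f => f [tuple]
  | m.+1 => fun f =>
    (\int[P]_x iter_integral P m (fun t => f (cons_tuple x t)))%E
  end.
Arguments iter_integral {d T R} P {n}.

Section iter_integral.
Context {d : measure_display} {T : measurableType d} {R : realType}.
Variable P : probability T R.
Local Notation iter_integral := (iter_integral P).
Local Open Scope ereal_scope.

Lemma prodPE n (A : set (n.-tuple T)) :
  prodP P A = iter_integral (fun t => (\1_A t)%:E).
Proof.
elim: n A => [//|n IH] A /=.
by apply: eq_integral => x _; rewrite IH.
Qed.

Lemma iter_integral_tcast m n (e : m = n) (f : n.-tuple T -> \bar R) :
  iter_integral f = iter_integral (fun w => f (tcast e w)).
Proof.
case: n / e f => f.
by congr iter_integral; apply: funext => w; rewrite tcast_id.
Qed.

Lemma iter_integral_cat m n (f : (m + n).-tuple T -> \bar R) :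
  iter_integral f =
  iter_integral (fun u => iter_integral (fun v => f [tuple of u ++ v])).
Proof.
elim: m f => [|m IH] f /=.
  by congr iter_integral; apply: funext => v; congr f; apply: val_inj.
apply: eq_integral => x _; rewrite IH; congr iter_integral; apply: funext => u.
by congr iter_integral; apply: funext => v; congr f; apply: val_inj.
Qed.

Lemma iter_integral_ge0 n (f : n.-tuple T -> \bar R) :
  (forall t, 0 <= f t) -> 0 <= iter_integral f.
Proof.
elim: n f => [|n IH] f f0 /=; first exact: f0.
by apply: integral_ge0 => x _; apply: IH.
Qed.

Lemma iter_integral_cst n (c : \bar R) :
  iter_integral (fun _ : n.-tuple T => c) = c.
Proof.
elim: n => [//|n IH] /=; under eq_integral do rewrite IH.
rewrite integral_cst // [X in _ * X = _]probability_setT; exact: mule1.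
Qed.

Lemma measurable_fun_cons_tuple n (x : T) (f : n.+1.-tuple T -> \bar R) :
  measurable_fun setT f ->
  measurable_fun setT (fun t : n.-tuple T => f (cons_tuple x t)).
Proof.
move=> mf.
apply: (measurableT_comp (g := fun t : n.-tuple T => cons_tuple x t) mf).
exact: measurable_cons.
Qed.

Lemma measurable_fun_iter_integral n dS (S : measurableType dS)
    (f : S -> n.-tuple T -> \bar R) :
  measurable_fun setT (fun p : S * n.-tuple T => f p.1 p.2) ->
  (forall s t, 0 <= f s t) ->
  measurable_fun setT (fun s => iter_integral (f s)).
Proof.
elim: n dS S f => [|n IH] dS S f mf f0 /=.
  exact: measurableT_comp mf (pair2_measurable _).
pose G (p : S * T) := iter_integral (fun t => f p.1 (cons_tuple p.2 t)).
have mG : measurable_fun setT G.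
  apply: (IH _ _ (fun p t => f p.1 (cons_tuple p.2 t))) => //.
  apply: (measurableT_comp (g := fun q : (S * T) * n.-tuple T =>
    (q.1.1, cons_tuple q.1.2 q.2)) mf).
  apply: measurable_fun_pair => /=.
    exact: measurableT_comp measurable_fst measurable_fst.
  apply: measurable_cons; last exact: measurable_snd.
  exact: measurableT_comp measurable_snd measurable_fst.
have G0 p : 0 <= G p by apply: iter_integral_ge0.
exact: (@measurable_fun_fubini_tonelli_F _ _ S T R P G mG G0).
Qed.

Lemma measurable_fun_iter_integral_cons n (f : n.+1.-tuple T -> \bar R) :
  measurable_fun setT f -> (forall t, 0 <= f t) ->
  measurable_fun setT (fun x => iter_integral (fun t => f (cons_tuple x t))).
Proof.
move=> mf f0; apply: (@measurable_fun_iter_integral n _ _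
  (fun x t => f (cons_tuple x t))) => //.
apply: (measurableT_comp
  (g := fun q : T * n.-tuple T => cons_tuple q.1 q.2) mf).
exact: measurable_cons.
Qed.

Lemma iter_integralD n (f g : n.-tuple T -> \bar R) :
  measurable_fun setT f -> measurable_fun setT g ->
  (forall t, 0 <= f t) -> (forall t, 0 <= g t) ->
  iter_integral (fun t => f t + g t) = iter_integral f + iter_integral g.
Proof.
elim: n f g => [//|n IH] f g mf mg f0 g0 /=.
rewrite -ge0_integralD //;
  try by [move=> x _; apply: iter_integral_ge0|
          exact: measurable_fun_iter_integral_cons].
by apply: eq_integral => x _; apply: IH => //; apply: measurable_fun_cons_tuple.
Qed.

Lemma iter_integralZl n (c : R) (f : n.-tuple T -> \bar R) :
  (0 <= c)%R -> measurable_fun setT f -> (forall t, 0 <= f t) ->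
  iter_integral (fun t => c%:E * f t) = c%:E * iter_integral f.
Proof.
elim: n f => [//|n IH] f c0 mf f0 /=.
rewrite -ge0_integralZl_EFin //;
  try by [move=> x _; apply: iter_integral_ge0|
          exact: measurable_fun_iter_integral_cons].
by apply: eq_integral => x _; apply: IH => //; apply: measurable_fun_cons_tuple.
Qed.

Lemma le_iter_integral n (f g : n.-tuple T -> \bar R) :
  measurable_fun setT f -> measurable_fun setT g ->
  (forall t, 0 <= f t) -> (forall t, f t <= g t) ->
  iter_integral f <= iter_integral g.
Proof.
elim: n f g => [|n IH] f g mf mg f0 fg /=; first exact: fg.
have g0 t : 0 <= g t by apply: le_trans (fg t).
apply: ge0_le_integral => //;
  try by [move=> x _; apply: iter_integral_ge0|
          exact: measurable_fun_iter_integral_cons].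
by move=> x _; apply: IH => //; apply: measurable_fun_cons_tuple.
Qed.

Lemma measurable_fun_indic_EFin n (A : set (n.-tuple T)) :
  measurable A -> measurable_fun setT (fun t => (\1_A t : R)%:E).
Proof. by move=> mA; apply/measurable_EFinP; apply: measurable_indic. Qed.

Lemma indic_EFin_ge0 n (A : set (n.-tuple T)) t : 0 <= (\1_A t : R)%:E.
Proof. by rewrite lee_fin indicE. Qed.

Lemma prodP_ge0 n (A : set (n.-tuple T)) : 0 <= prodP P A.
Proof. by rewrite prodPE; apply: iter_integral_ge0 => t; rewrite lee_fin indicE. Qed.

Lemma le_prodP n (A B : set (n.-tuple T)) : measurable A -> measurable B ->
  A `<=` B -> prodP P A <= prodP P B.
Proof.
move=> mA mB AB; rewrite !prodPE.
apply: le_iter_integral; try exact: measurable_fun_indic_EFin.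
  exact: indic_EFin_ge0.
move=> t; rewrite lee_fin !indicE.
by have [/set_mem/AB/mem_set ->|_] := boolP (t \in A); case: (t \in B).
Qed.

Lemma prodP_setT n : prodP P [set: n.-tuple T] = 1.
Proof.
rewrite prodPE -[RHS](iter_integral_cst n); congr iter_integral.
by apply: funext => t; rewrite indicT.
Qed.

Lemma prodP_le1 n (A : set (n.-tuple T)) : measurable A -> prodP P A <= 1.
Proof. by move=> mA; rewrite -(prodP_setT n); apply: le_prodP. Qed.

Lemma prodP_fin_num n (A : set (n.-tuple T)) : measurable A ->
  prodP P A \is a fin_num.
Proof.
move=> mA; rewrite ge0_fin_numE ?prodP_ge0 //.
by rewrite (le_lt_trans (prodP_le1 _ _ mA)) ?ltry.
Qed.

Lemma prodP_setC n (A : set (n.-tuple T)) : measurable A ->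
  prodP P A + prodP P (~` A) = 1.
Proof.
move=> mA; rewrite !prodPE -iter_integralD;
  try by [exact: indic_EFin_ge0|
          apply: measurable_fun_indic_EFin => //; exact: measurableC].
rewrite -[RHS](iter_integral_cst n); congr iter_integral; apply: funext => t.
by rewrite -EFinD indicC !indicE; case: (t \in A); rewrite /= ?addr0 ?add0r.
Qed.

End iter_integral.

Section hits.
Context {d : measure_display} {T : measurableType d} {R : realType}.
Context {n : nat}.
Implicit Types (A : set (n.-tuple T)) (k : nat).

Definition hits A k (w : (n * k).-tuple T) : R := \sum_(i < k) \1_A (block w i).

Definition hits_ge A k (s : R) : set ((n * k).-tuple T) :=
  [set w | s * k%:R <= hits A k w].

Lemma measurable_block k (i : 'I_k) :
  measurable_fun setT (fun w : (n * k).-tuple T => block w i).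
Proof.
apply/measurable_fun_tnthP => j.
rewrite (_ : _ \o _ = fun w => tnth w (Ordinal (block_lt i j))).
  exact: measurable_tnth.
by apply: funext => w /=; rewrite tnth_mktuple.
Qed.

Lemma measurable_hits A k : measurable A -> measurable_fun setT (hits A k).
Proof.
move=> mA; apply: measurable_sum => i /=.
by apply: measurableT_comp; [exact: measurable_indic|exact: measurable_block].
Qed.

Lemma measurable_hits_ge A k s : measurable A -> measurable (hits_ge A k s).
Proof.
move=> mA.
have := measurable_hits _ k mA measurableT _ (measurable_itv `[s * k%:R, +oo[).
rewrite setTI; congr measurable; apply/seteqP; split => w /=;
  by rewrite in_itv /= andbT.
Qed.

Lemma hits_ge0 A k w : 0 <= hits A k w.
Proof. by apply: sumr_ge0 => i _; rewrite indicE. Qed.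

Lemma hits_le A k w : hits A k w <= k%:R.
Proof.
rewrite /hits -[k in k%:R]card_ord -sum1_card natr_sum.
by apply: ler_sum => i _; rewrite indicE; case: (_ \in _).
Qed.

Lemma hitsC A k w : hits (~` A) k w = k%:R - hits A k w.
Proof.
rewrite /hits -[k in k%:R]card_ord -sum1_card natr_sum -sumrB.
apply: eq_bigr => i _; rewrite indicC indicE.
by case: (_ \in _); rewrite ?subr0 ?subrr.
Qed.

Lemma hits_ge0E A k : hits_ge A k 0 = setT.
Proof.
by apply/seteqP; split => w // _; rewrite /hits_ge /= mul0r hits_ge0.
Qed.

Lemma setC_hits_ge A k s : ~` hits_ge A k s `<=` hits_ge (~` A) k (1 - s).
Proof.
move=> w /negP; rewrite -ltNge => lt_hits.
by rewrite /hits_ge /= hitsC mulrBl mul1r lerD2l lerN2 ltW.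
Qed.

Lemma Sset_hits_ge A k s : (0 < k)%N ->
  @Sset _ _ R n A `[s, 1] k = hits_ge A k s.
Proof.
move=> k_gt0; have kR_gt0 : 0 < k%:R :> R by rewrite ltr0n.
apply/seteqP; split => w; rewrite /Sset /hits_ge /= in_itv /=.
  by move=> /andP[+ _]; rewrite ler_pdivlMr.
move=> s_le; rewrite ler_pdivlMr // s_le ler_pdivrMr // mul1r.
exact: hits_le.
Qed.

Definition tcat k (u : n.-tuple T) (v : (n * k).-tuple T) :
    (n * k.+1).-tuple T :=
  tcast (esym (mulnS n k)) [tuple of u ++ v].

Lemma block_tcat0 k u v : block (@tcat k u v) ord0 = u.
Proof.
apply: eq_from_tnth => j; rewrite tnth_mktuple tcastE.
rewrite (_ : cast_ord _ _ = lshift (n * k) j); first exact: tnth_lshift.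
by apply: val_inj => /=; rewrite mul0n add0n.
Qed.

Lemma block_tcatS k u v (i : 'I_k) :
  block (@tcat k u v) (lift ord0 i) = block v i.
Proof.
apply: eq_from_tnth => j; rewrite !tnth_mktuple tcastE.
rewrite (_ : cast_ord _ _ = rshift n (Ordinal (block_lt i j))).
  exact: tnth_rshift.
by apply: val_inj => /=; rewrite /bump /= add1n mulSn addnA.
Qed.

Lemma hits_tcat A k u v : hits A k.+1 (@tcat k u v) = \1_A u + hits A k v.
Proof.
rewrite /hits big_ord_recl block_tcat0; congr (_ + _).
by apply: eq_bigr => i _; rewrite block_tcatS.
Qed.

End hits.

Section chernoff.
Context {d : measure_display} {T : measurableType d} {R : realType}.
Variable P : probability T R.
Context {n : nat} {A : set (n.-tuple T)}.
Hypothesis mA : measurable A.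
Local Open Scope ereal_scope.

Lemma measurable_fun_exp_hits (L : R) k :
  measurable_fun setT (fun w : (n * k).-tuple T => (expR (L * hits A k w))%:E).
Proof.
apply/measurable_EFinP; apply: measurableT_comp => //.
exact: measurable_funM (measurable_hits _ k mA).
Qed.

Lemma iter_integral_exp_indic (L p : R) : (0 <= L)%R -> prodP P A = p%:E ->
  iter_integral P (fun u => (expR (L * \1_A u))%:E) = (1 + (expR L - 1) * p)%:E.
Proof.
move=> L_ge0 PA; have eL_ge0 : (0 <= expR L - 1)%R.
  by rewrite subr_ge0 -expR0 ler_expR.
rewrite (_ : (fun u => _) = (fun u => 1 + (expR L - 1)%:E * (\1_A u)%:E)).
  rewrite iter_integralD //; try by [exact: measurable_cst|
    move=> u; rewrite mule_ge0 ?lee_fin|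
    apply: emeasurable_funM => //; exact: measurable_fun_indic_EFin].
  rewrite iter_integralZl //; try exact: measurable_fun_indic_EFin.
  by rewrite iter_integral_cst -prodPE PA.
apply: funext => u; rewrite -EFinM -[1]/(1%:E) -EFinD indicE.
by case: (u \in A); rewrite ?mulr1 ?mulr0 ?expR0 ?addr0 // addrC subrK.
Qed.

(* The blocks are independent, so the moment generating function factorises. *)
Lemma iter_integral_exp_hits (L p : R) k : (0 <= L)%R -> prodP P A = p%:E ->
  iter_integral P (fun w : (n * k).-tuple T => (expR (L * hits A k w))%:E) =
  ((1 + (expR L - 1) * p) ^+ k)%:E.
Proof.
move=> L_ge0 PA; elim: k => [|k IH].
  rewrite -[RHS](iter_integral_cst P (n * 0)); congr iter_integral.
  by apply: funext => w; rewrite /hits big_ord0 mulr0 expR0.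
rewrite (iter_integral_tcast P _ _ (esym (mulnS n k))) iter_integral_cat.
have inner (u : n.-tuple T) :
    iter_integral P (fun v : (n * k).-tuple T =>
      (expR (L * hits A k.+1 (@tcat _ _ n k u v)))%:E) =
    ((1 + (expR L - 1) * p) ^+ k)%:E * (expR (L * \1_A u))%:E.
  rewrite (_ : (fun v => _) =
    fun v => (expR (L * \1_A u))%:E * (expR (L * hits A k v))%:E).
    rewrite iter_integralZl ?expR_ge0 ?IH 1?muleC //.
    exact: measurable_fun_exp_hits.
  by apply: funext => v; rewrite -EFinM -expRD -mulrDr -hits_tcat.
rewrite (_ : (fun u => _) = fun u => ((1 + (expR L - 1) * p) ^+ k)%:E *
  (expR (L * \1_A u))%:E); last by apply: funext => u; exact: inner.
rewrite iter_integralZl ?(iter_integral_exp_indic _ _ L_ge0 PA) -?EFinM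
  ?exprSr //.
- have p_ge0 : (0 <= p)%R by rewrite -lee_fin -PA prodP_ge0.
  by apply: exprn_ge0; rewrite addr_ge0 // mulr_ge0 // subr_ge0 -expR0 ler_expR.
apply/measurable_EFinP; apply: measurableT_comp => //.
by apply: measurable_funM => //; exact: measurable_indic.
Qed.

Lemma prodP_hits_ge_le (L p tau : R) k : (0 <= L)%R -> prodP P A = p%:E ->
  prodP P (hits_ge A k tau) <=
  (((expR (- (L * tau)) * (1 + (expR L - 1) * p)) ^+ k)%R)%:E.
Proof.
move=> L_ge0 PA; rewrite prodPE exprMn -expRM_natr EFinM.
rewrite -(iter_integral_exp_hits _ _ k L_ge0 PA) -iter_integralZl;
  try by [exact: expR_ge0|exact: measurable_fun_exp_hits|
          move=> w; rewrite lee_fin expR_ge0].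
apply: le_iter_integral; try exact: indic_EFin_ge0.
- by apply: measurable_fun_indic_EFin; exact: measurable_hits_ge.
- by apply: emeasurable_funM => //; exact: measurable_fun_exp_hits.
move=> w; rewrite -EFinM lee_fin -expRD indicE.
have [|_] := boolP (w \in hits_ge A k tau); last exact: expR_ge0.
rewrite inE /hits_ge /= => tau_le.
rewrite -[leLHS]expR0 ler_expR mulNr -mulrA addrC.
by rewrite subr_ge0 ler_wpM2l.
Qed.

End chernoff.

Lemma chernoff_rate {R : realType} (q tau : R) : 0 <= q -> q < tau -> q <= 1 ->
  exists2 L : R, 0 <= L & 0 <= expR (- (L * tau)) * (1 + (expR L - 1) * q) < 1.
Proof.
move=> q_ge0 q_lt_tau q_le1; pose s := (tau - q) / 2.
have s_gt0 : 0 < s by rewrite divr_gt0 // subr_gt0.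
have s1_gt0 : 0 < 1 + s by rewrite addr_gt0.
have eL : expR (ln (1 + s)) = 1 + s by rewrite lnK // posrE.
exists (ln (1 + s)); first by rewrite ln_ge0 // lerDl ltW.
rewrite eL addrAC subrr add0r; apply/andP; split.
  by rewrite mulr_ge0 ?expR_ge0 // addr_ge0 // mulr_ge0 // ltW.
rewrite expRN mulrC ltr_pdivrMr ?expR_gt0 // mul1r.
have ln_ge : 1 - (1 + s)^-1 <= ln (1 + s).
  by have := expR_ge1Dx (- ln (1 + s)); rewrite expRN eL; lra.
have inv_s : (1 - (1 + s)^-1) * (1 + s) = s.
  by rewrite mulrBl mulVf ?gt_eqF // mul1r; lra.
have tau_gt0 : 0 < tau by apply: le_lt_trans q_lt_tau.
apply: lt_le_trans (expR_ge1Dx _); rewrite ltrD2l.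
apply: lt_le_trans (ler_wpM2r (ltW tau_gt0) ln_ge).
rewrite -(ltr_pM2r s1_gt0) [ltRHS]mulrAC inv_s -mulrA ltr_pM2l //.
have : q * s <= s by rewrite ler_piMl // ltW.
rewrite /s; lra.
Qed.

Section law_of_large_numbers.
Context {d : measure_display} {T : measurableType d} {R : realType}.
Variable P : probability T R.
Context {n : nat} {A : set (n.-tuple T)}.
Hypothesis mA : measurable A.

Lemma prodP_hits_ge_near (q tau eps : R) :
  prodP P A = q%:E -> q < tau -> 0 < eps ->
  \forall k \near \oo, (prodP P (hits_ge A k tau) <= eps%:E)%E.
Proof.
move=> PA q_lt_tau eps_gt0.
have q_ge0 : 0 <= q by rewrite -lee_fin -PA prodP_ge0.
have q_le1 : q <= 1 by rewrite -lee_fin -PA prodP_le1.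
have [L L_ge0 /andP[rho_ge0 rho_lt1]] := chernoff_rate _ _ q_ge0 q_lt_tau q_le1.
rewrite -(ger0_norm rho_ge0) in rho_lt1.
have /cvgr_lt/(_ _ eps_gt0) := cvg_expr rho_lt1.
apply: filterS => k rho_k.
apply: le_trans (prodP_hits_ge_le P mA L q tau k L_ge0 PA) _.
by rewrite lee_fin ltW.
Qed.

End law_of_large_numbers.

Lemma sup_eq_of_ubound {R : realType} (X : set R) (p : R) :
  X 0 -> (forall s, 0 <= s < p -> X s) -> ubound X p -> sup X = p.
Proof.
move=> X0 Xlt Xp; apply/eqP; rewrite eq_le ge_sup //=; last by exists 0.
have supX : has_sup X by split; [exists 0 | exists p].
rewrite leNgt; apply/negP => sup_lt_p.
have sup_ge0 : 0 <= sup X by exact: sup_upper_bound.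
have : (sup X + p) / 2 <= sup X.
  by apply: sup_upper_bound => //; apply: Xlt; apply/andP; split; lra.
lra.
Qed.

Section Cmeasure.
Context {d : measure_display} {T : measurableType d} {R : realType}.
Context {P : probability T R} {delta : R}.
Hypothesis delta_lt1 : delta < 1.

Lemma Tbar_setC m (B : set (m.-tuple T)) : measurable B ->
  (prodP P (~` B) <= (1 - delta)%:E)%E -> Tbar P delta (n := m) B.
Proof.
move=> mB PBC; split => //; have := prodP_setC P _ _ mB.
have := prodP_fin_num P _ _ (measurableC mB).
move: PBC; case: (prodP P (~` B)) => // r; rewrite lee_fin => r_le _.
case: (prodP P B) => // q [q_eq]; rewrite lee_fin; lra.
Qed.

Context {C : forall n : nat, set (set (n.-tuple T))}.
Hypothesis CC : CClass C.
Hypothesis TC : forall m, (0 < m)%N -> @Tbar _ _ _ P delta m `<=` C m.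
Context {n : nat} {A : set (n.-tuple T)}.
Hypotheses (n_gt0 : (0 < n)%N) (mA : measurable A).

Lemma definitively_in_lt (p s : R) : prodP P A = p%:E -> s < p ->
  definitively_in C A `[s, 1].
Proof.
move=> PA s_lt_p.
have PAC : prodP P (~` A) = (1 - p)%:E.
  have := prodP_setC P _ _ mA; rewrite PA EFinB => <-.
  by rewrite (addeC p%:E) addeK.
have gap : 0 < 1 - delta by rewrite subr_gt0.
have sC_lt : 1 - p < 1 - s by rewrite ltrD2l ltrN2.
have [k0 _ small] := prodP_hits_ge_near P (measurableC mA) _ _ _ PAC sC_lt gap.
exists k0 => k k0_lt_k; have k_gt0 : (0 < k)%N by apply: leq_ltn_trans k0_lt_k.
rewrite Sset_hits_ge //; apply: TC; first by rewrite muln_gt0 n_gt0.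
apply: Tbar_setC; first exact: measurable_hits_ge.
apply: le_trans (small k (ltnW k0_lt_k)).
apply: le_prodP (setC_hits_ge A k s).
  by apply: measurableC; exact: measurable_hits_ge.
by apply: measurable_hits_ge; exact: measurableC.
Qed.

Lemma not_definitively_in_gt (p s : R) : prodP P A = p%:E -> p < s ->
  ~ definitively_in C A `[s, 1].
Proof.
move=> PA p_lt_s [k0 in_C].
have gap : 0 < 1 - delta by rewrite subr_gt0.
have [k1 _ small] := prodP_hits_ge_near P mA _ _ _ PA p_lt_s gap.
pose k := (maxn k0 k1).+1.
have nk_gt0 : (0 < n * k)%N by rewrite muln_gt0 n_gt0.
have S_in_C : C (n * k)%N (hits_ge A k s).
  by rewrite -Sset_hits_ge //; apply: in_C; rewrite /k ltnS leq_maxl.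
have SC_in_C : C (n * k)%N (~` hits_ge A k s).
  apply: TC => //; apply: Tbar_setC.
    by apply: measurableC; exact: measurable_hits_ge.
  by rewrite setCK; apply: small; rewrite /= /k leqW // leq_maxr.
have [_ _ _ no_disjoint] := CC _ nk_gt0.
by have [w [S_w SC_w]] := no_disjoint _ _ S_in_C SC_in_C.
Qed.

Lemma Cmeasure_prodP : Cmeasure C A = fine (prodP P A).
Proof.
have PA := esym (fineK (prodP_fin_num P _ _ mA)); set p := fine _ in PA *.
have p_le1 : p <= 1 by rewrite -lee_fin -PA prodP_le1.
apply: sup_eq_of_ubound.
- split; first by rewrite lexx ler01.
  exists 0%N => k k_gt0; rewrite Sset_hits_ge // hits_ge0E.
  by case: (CC (n * k)%N); rewrite // muln_gt0 n_gt0.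
- move=> s /andP[s_ge0 s_lt_p]; split.
    by rewrite s_ge0 ltW // (lt_le_trans s_lt_p).
  exact: definitively_in_lt PA s_lt_p.
- move=> s [_ s_in]; rewrite leNgt; apply/negP => p_lt_s.
  exact: not_definitively_in_gt PA p_lt_s s_in.
Qed.

End Cmeasure.

Theorem mainTheorem7 (d : measure_display) (T : measurableType d)
  (R : realType) (P : probability T R) (delta : R)
  (C1 C2 : forall n : nat, set (set (n.-tuple T))) :
  1 / 2 < delta < 1 ->
  @CClass d T C1 -> @CClass d T C2 ->
  (forall n : nat, (0 < n)%N -> @Tbar d T R P delta n `<=` C1 n `&` C2 n) ->
  @Cequiv d T R C1 C2.
Proof.
move=> /andP[_ delta_lt1] CC1 CC2 TC n n_gt0 A mA.
have TC1 m : (0 < m)%N -> @Tbar _ _ _ P delta m `<=` C1 m.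
  by move=> m_gt0 B /(TC m m_gt0)[].
have TC2 m : (0 < m)%N -> @Tbar _ _ _ P delta m `<=` C2 m.
  by move=> m_gt0 B /(TC m m_gt0)[].
rewrite (Cmeasure_prodP delta_lt1 CC1 TC1 n_gt0 mA).
by rewrite (Cmeasure_prodP delta_lt1 CC2 TC2 n_gt0 mA).
Qed.
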